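(* Let $N,M_s,M_d\ge1$ be integers, $P_s,P_r,\sigma_r^2,\sigma_d^2>0$, $\varepsilon\ge 0$, $\mathbf H_{sr}\in\mathbb C^{N\times M_s}$ and $\tilde{\mathbf H}_{rd}\in\mathbb C^{M_d\times N}$. Consider the problem $$\mathcal P_1:\ \max_{\mathbf W\in\mathbb C^{N\times N},\,\mathbf b\in\mathbb C^{M_s},\,\mathbf r\in\mathbb C^{M_d}}\ \min_{\|\Delta \mathbf H\|_F\leq \varepsilon}\frac{P_s|\mathbf r^H(\tilde {\mathbf H}_{rd}+\Delta \mathbf H)\mathbf W\mathbf H_{sr}\mathbf b|^2}{\sigma_r^2\|\mathbf r^H(\tilde {\mathbf H}_{rd}+\Delta \mathbf H)\mathbf W\|_2^2+\sigma_d^2}$$ subject to $[P_s\mathbf W\mathbf H_{sr}\mathbf b\mathbf b^H\mathbf H_{sr}^H\mathbf W^H+\sigma_r^2\mathbf W\mathbf W^H]_{i,i}\leq P_r$ for $i=1,\dots,N$, $\|\mathbf b\|_2=1$, $\|\mathbf r\|_2=1$ (the minimum being over $\Delta\mathbf H\in\mathbb C^{M_d\times N}$). Let $f^\circ$ be the maximum value and $\mathbf w^\circ$ an optimal solution of $$\max_{\mathbf w\in\mathbb C^N}\ f(\mathbf w)= \|\tilde {\mathbf H}_{rd}\mathbf w\|_2-\varepsilon\|\mathbf w\|_2\quad\text{s.t. } |w_i|\le 1,\ i=1,\dots,N.$$ Then the optimal $(\mathbf W,\mathbf b,\mathbf r)$ of $\mathcal P_1$ are given by $$\mathbf W=\sqrt{\frac{P_r}{\|\mathbf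 H_{sr}\mathbf b\|_2^2(P_s\|\mathbf H_{sr}\mathbf b\|_2^2+\sigma_r^2)}}\,\mathbf w^\circ\mathbf b^{ H}\mathbf H_{sr}^H,\qquad \mathbf b={\bm \nu}(\mathbf H_{sr}^H\mathbf H_{sr}),\qquad \mathbf r=\frac{\tilde {\mathbf H}_{rd}\mathbf w^\circ}{\|\tilde {\mathbf H}_{rd}\mathbf w^\circ\|_2},$$ and the optimal received SNR is $$\text{SNR}=\frac{\tilde P_r^2P_s\|\mathbf H_{sr}\mathbf b\|_2^2\max\{f^\circ, 0\}^2}{\tilde P_r^2\sigma_r^2\max\{f^\circ, 0\}^2+\sigma_d^2},\qquad \tilde P_r=\sqrt{\frac{P_r}{P_s\|\mathbf H_{sr}\mathbf b\|_2^2+\sigma_r^2}}.$$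
   Context: ${\bm \nu}(\mathbf A)$ denotes a unit-norm eigenvector associated with the largest eigenvalue of a Hermitian matrix $\mathbf A$. $[\mathbf A]_{i,i}$ is the $i$-th diagonal entry; $(\cdot)^H$ conjugate transpose; $\|\cdot\|_2$ Euclidean norm; $\|\cdot\|_F$ Frobenius norm; $w_i$ is the $i$-th entry of $\mathbf w$. The setting is a two-hop amplify-and-forward relay: source beamformer $\mathbf b$, relay matrix $\mathbf W$, destination beamformer $\mathbf r$, first-hop channel $\mathbf H_{sr}$, estimated second-hop channel $\tilde{\mathbf H}_{rd}$ with error $\Delta\mathbf H$ bounded by $\varepsilon$, source power $P_s$, per-antenna relay power limit $P_r$, noise variances $\sigma_r^2,\sigma_d^2$. *)

From HB Require Import structures.
From mathcomp Require Import all_boot all_order all_algebra.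
From mathcomp Require Import reals complex.
Set Implicit Arguments. Unset Strict Implicit. Unset Printing Implicit Defensive.
Import Order.TTheory GRing.Theory Num.Theory.
Local Open Scope ring_scope.

Section Defs.
Variable R : realType.
Local Notation C := R[i].

Definition adjmx m n (A : 'M[C]_(m, n)) : 'M[C]_(n, m) := (map_mx Num.conj A)^T.

Definition fnorm m n (A : 'M[C]_(m, n)) : C :=
  sqrtC (\sum_(i < m) \sum_(j < n) `|A i j| ^+ 2).

Definition sc (A : 'M[C]_(1, 1)) : C := A 0 0.

(* v is a unit-norm eigenvector associated with the largest eigenvalue of
   the Hermitian matrix A, i.e. v = nu(A) *)
Definition top_eigvec n (A : 'M[C]_n) (v : 'cV[C]_n) : Prop :=
  fnorm v = 1 /\
  exists lam : C, A *m v = lam *: v /\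
    (forall (mu : C) (u : 'cV[C]_n), u != 0 -> A *m u = mu *: u -> mu <= lam).

Definition snr (Ms Md N : nat) (Ps sr2 sd2 : C)
  (Hsr : 'M[C]_(N, Ms)) (Hrd : 'M[C]_(Md, N))
  (W : 'M[C]_N) (b : 'cV[C]_Ms) (r : 'cV[C]_Md) (dH : 'M[C]_(Md, N)) : C :=
  Ps * `|sc (adjmx r *m (Hrd + dH) *m W *m Hsr *m b)| ^+ 2 /
  (sr2 * fnorm (adjmx r *m (Hrd + dH) *m W) ^+ 2 + sd2).

Definition feasibleP1 (Ms Md N : nat) (Ps Pr sr2 : C) (Hsr : 'M[C]_(N, Ms))
  (W : 'M[C]_N) (b : 'cV[C]_Ms) (r : 'cV[C]_Md) : Prop :=
  (forall i : 'I_N,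
     (Ps *: (W *m Hsr *m b *m adjmx b *m adjmx Hsr *m adjmx W)
      + sr2 *: (W *m adjmx W)) i i <= Pr)
  /\ fnorm b = 1 /\ fnorm r = 1.

Definition faux (Md N : nat) (eps : C) (Hrd : 'M[C]_(Md, N)) (w : 'cV[C]_N) : C :=
  fnorm (Hrd *m w) - eps * fnorm w.

Definition feasible_aux (N : nat) (w : 'cV[C]_N) : Prop :=
  forall i : 'I_N, `|w i 0| <= 1.

End Defs.

(* For a feasible (W, b, r) put v = W Hsr b and h = ||Hsr b||^2.  By Cauchy-Schwarz,
   |v_i|^2 <= h ||row_i W||^2, so the i-th relay power constraint bounds |v_i|^2 by
   c^2 = h Pr / (Ps h + sr2); hence v = c w with |w_i| <= 1, and the SNR is at most
   an explicit function of h and of the destination gain |r^H (Hrd + dH) w|, increasing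
   in both.  Now h <= lambda_max(Hsr^H Hsr) = ||Hsr nu||^2, and the rank-one error
   dH = -a r w^H aligned against the phase of r^H Hrd w reduces that gain to
   max(|r^H Hrd w| - eps ||w||, 0) <= max(f0, 0).  The rank-one relay w0 b^H Hsr^H with
   r parallel to Hrd w0 turns every inequality into an equality. *)

From mathcomp Require Import all_boot all_order all_algebra.
From mathcomp Require Import reals complex ring.
Import Order.TTheory GRing.Theory Num.Theory.
Set Implicit Arguments.
Unset Strict Implicit.
Unset Printing Implicit Defensive.

Local Open Scope ring_scope.

Section NumFieldFacts.
Variable F : numFieldType.

Lemma ler_ratio_affine (a d x y : F) : 0 <= a -> 0 < d -> 0 <= x -> x <= y ->
  x / (a * x + d) <= y / (a * y + d).
Proof.
move=> a0 d0 x0 xy.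
have pos (z : F) : 0 <= z -> 0 < a * z + d by move=> z0; exact: ltr_wpDl (mulr_ge0 a0 z0) d0.
rewrite ler_pdivrMr ?pos // mulrAC ler_pdivlMr ?pos ?(le_trans x0) //.
by rewrite !mulrDr (mulrCA x) (mulrCA y) (mulrC x y) lerD2l ler_pM2r.
Qed.

Lemma polar_decomp (z : F) : exists2 p : F, `|p| = 1 & z = `|z| * p.
Proof.
have [->|z0] := eqVneq z 0; first by exists 1; rewrite ?normr1 ?normr0 ?mul0r.
exists (z / `|z|); first by rewrite normf_div normr_id divff ?normr_eq0.
by rewrite mulrC divfK ?normr_eq0.
Qed.

Lemma real_max0_le (x y : F) : x \is Num.real -> y \is Num.real -> x <= y ->
  Num.max x 0 <= Num.max y 0.
Proof.
move=> xr yr xy; case: (real_ge0P yr) => y0; case: (real_ge0P xr) => x0 //.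
by have := le_lt_trans x0 (le_lt_trans xy y0); rewrite ltxx.
Qed.

Lemma real_max0_le_ge0 (x y : F) : x \is Num.real -> 0 <= y -> x <= y -> Num.max x 0 <= y.
Proof. by move=> xr y0 xy; case: (real_ge0P xr). Qed.

End NumFieldFacts.

Section RelaySnrBounds.
Variables (F : numFieldType) (Ps Pr sr2 sd2 : F).
Hypotheses (Ps_gt0 : 0 < Ps) (Pr_gt0 : 0 < Pr) (sr2_gt0 : 0 < sr2) (sd2_gt0 : 0 < sd2).
Let Ps_ge0 := ltW Ps_gt0.
Let Pr_ge0 := ltW Pr_gt0.
Let sr2_ge0 := ltW sr2_gt0.

(* The SNR of the theorem as a function of h = ||Hsr b||^2 and t = max(f0, 0)^2. *)
Definition snr_opt (h t : F) := Ps * Pr * h * t / (sr2 * Pr * t + sd2 * (Ps * h + sr2)).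

Lemma gain_den_gt0 {h : F} : 0 <= h -> 0 < Ps * h + sr2.
Proof. by move=> h0; apply: ltr_wpDl (mulr_ge0 Ps_ge0 h0) sr2_gt0. Qed.

Lemma snr_den_gt0 {h t : F} : 0 <= h -> 0 <= t -> 0 < sr2 * Pr * t + sd2 * (Ps * h + sr2).
Proof.
move=> h0 t0; apply: ltr_wpDl (mulr_gt0 sd2_gt0 (gain_den_gt0 h0)).
exact: mulr_ge0 (mulr_ge0 sr2_ge0 Pr_ge0) t0.
Qed.

Lemma snr_opt_ge0 (h t : F) : 0 <= h -> 0 <= t -> 0 <= snr_opt h t.
Proof. by move=> h0 t0; rewrite divr_ge0 ?mulr_ge0 ?(ltW (snr_den_gt0 h0 t0)). Qed.

Lemma snr_opt_le (h h' t t' : F) : 0 <= h -> h <= h' -> 0 <= t -> t <= t' ->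
  snr_opt h t <= snr_opt h' t'.
Proof.
move=> h0 hh' t0 tt'; have h'0 := le_trans h0 hh'.
apply: (@le_trans _ _ (snr_opt h' t)).
  have E (g : F) : snr_opt g t = Ps * Pr * t * (g / (sd2 * Ps * g + (sr2 * Pr * t + sd2 * sr2))).
    rewrite /snr_opt [Ps * Pr * g * t]mulrAC -(mulrA (Ps * Pr * t)); congr (_ * (_ / _)); ring.
  rewrite !E; apply: ler_wpM2l; first by rewrite !mulr_ge0.
  apply: ler_ratio_affine => //; first by rewrite mulr_ge0 // ltW.
  by apply: ltr_wpDl; rewrite ?mulr_gt0 ?mulr_ge0.
rewrite /snr_opt -!(mulrA (Ps * Pr * h')); apply: ler_wpM2l; first by rewrite !mulr_ge0.
by apply: ler_ratio_affine; rewrite ?mulr_ge0 ?mulr_gt0 ?gain_den_gt0.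
Qed.

Lemma snr_optE (h t : F) : 0 <= h -> 0 <= t ->
  let Q := Pr / (Ps * h + sr2) in Q * Ps * h * t / (Q * sr2 * t + sd2) = snr_opt h t.
Proof.
move=> h0 t0 Q; rewrite /Q /snr_opt; have hD := gain_den_gt0 h0.
have QD : 0 < Pr / (Ps * h + sr2) * sr2 * t + sd2.
  by apply: ltr_wpDl; rewrite // !mulr_ge0 // invr_ge0 ltW.
by field; rewrite !gt_eqF ?snr_den_gt0.
Qed.

Definition relay_scale (h : F) := Pr / (h * (Ps * h + sr2)).

Lemma relay_scale_ge0 (h : F) : 0 <= h -> 0 <= relay_scale h.
Proof. by move=> h0; rewrite divr_ge0 ?mulr_ge0 ?(ltW (gain_den_gt0 h0)). Qed.

Lemma snr_opt_rank1 (h t : F) : 0 <= h -> 0 <= t ->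
  Ps * (relay_scale h * t * h ^+ 2) / (sr2 * (relay_scale h * t * h) + sd2) = snr_opt h t.
Proof.
move=> h0 t0; have [->|hn0] := eqVneq h 0.
  by rewrite /snr_opt !(mulr0, mul0r, expr0n).
have hD := gain_den_gt0 h0.
rewrite /relay_scale /snr_opt; field.
by rewrite hn0 ?gt_eqF ?snr_den_gt0.
Qed.

Lemma relay_power_rank1 (h a : F) : 0 <= h -> 0 <= a -> a <= 1 ->
  Ps * (relay_scale h * a * h ^+ 2) + sr2 * (relay_scale h * a * h) <= Pr.
Proof.
move=> h0 a0 a1; have [->|hn0] := eqVneq h 0.
  by rewrite !(mulr0, mul0r, expr0n, addr0) ltW.
have -> : Ps * (relay_scale h * a * h ^+ 2) + sr2 * (relay_scale h * a * h) = Pr * a.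
  by rewrite /relay_scale; field; rewrite hn0 gt_eqF ?gain_den_gt0.
exact: ler_piMr Pr_ge0 a1.
Qed.

(* The largest |(W Hsr b)_i|^2 that the i-th relay power constraint allows when
   ||Hsr b||^2 = h. *)
Definition output_power_max (h : F) := h * Pr / (Ps * h + sr2).

Lemma output_power_max_ge0 (h : F) : 0 <= h -> 0 <= output_power_max h.
Proof. by move=> h0; rewrite divr_ge0 ?mulr_ge0 ?(ltW (gain_den_gt0 h0)). Qed.

Lemma output_power_le (h y z : F) : 0 <= h -> 0 <= y -> 0 <= z ->
  Ps * y + sr2 * z <= Pr -> y <= z * h -> y <= output_power_max h.
Proof.
move=> h0 y0 z0 power yz; rewrite ler_pdivlMr ?gain_den_gt0 //.
apply: (@le_trans _ _ (h * (Ps * y + sr2 * z))); last by apply: ler_wpM2l.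
have -> : y * (Ps * h + sr2) = h * (Ps * y) + sr2 * y by ring.
by rewrite mulrDr lerD2l mulrCA ler_wpM2l // mulrC.
Qed.

(* [S] is the signal term |r^H G W Hsr b|^2 and [T] the noise term ||r^H G W||^2 of
   the SNR; [S <= T * h] is Cauchy-Schwarz. *)
Lemma snr_le_snr_opt (h t S T : F) : 0 <= h -> 0 <= t -> S <= T * h ->
  S = output_power_max h * t -> Ps * S / (sr2 * T + sd2) <= snr_opt h t.
Proof.
move=> h0 t0 ST eS; have hD := gain_den_gt0 h0.
have S0 : 0 <= S by rewrite eS mulr_ge0 ?output_power_max_ge0.
have [h_eq0|hn0] := eqVneq h 0.
  by rewrite eS h_eq0 /output_power_max !(mul0r, mulr0) snr_opt_ge0.
have hp : 0 < h by rewrite lt_def hn0.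
have T0 : 0 <= T by rewrite -(pmulr_lge0 _ hp) (le_trans S0).
have SD : 0 < sr2 * (S / h) + sd2 by apply: ltr_wpDl; rewrite // mulr_ge0 // divr_ge0.
have TD : 0 < sr2 * T + sd2 by apply: ltr_wpDl; rewrite // mulr_ge0.
apply: (@le_trans _ _ (Ps * S / (sr2 * (S / h) + sd2))).
  apply: ler_wpM2l; first exact: mulr_ge0.
  rewrite lef_pV2 ?posrE // lerD2r; apply: ler_wpM2l => //.
  by rewrite ler_pdivrMr.
suff -> : Ps * S / (sr2 * (S / h) + sd2) = snr_opt h t by [].
by rewrite eS /output_power_max /snr_opt; field; rewrite hn0 !gt_eqF ?snr_den_gt0.
Qed.

End RelaySnrBounds.

Section Matrix.
Variable R : realType.
Local Notation C := R[i].

Lemma adjmxE m n (A : 'M[C]_(m, n)) i j : adjmx A i j = (A j i)^*.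
Proof. by rewrite !mxE. Qed.

Lemma adjmxM m n p (A : 'M[C]_(m, n)) (B : 'M[C]_(n, p)) :
  adjmx (A *m B) = adjmx B *m adjmx A.
Proof. by rewrite /adjmx map_mxM trmx_mul. Qed.

Lemma adjmxK m n (A : 'M[C]_(m, n)) : adjmx (adjmx A) = A.
Proof. by apply/matrixP => i j; rewrite !adjmxE conjCK. Qed.

Lemma adjmxZ m n (k : C) (A : 'M[C]_(m, n)) : adjmx (k *: A) = k^* *: adjmx A.
Proof. by apply/matrixP => i j; rewrite !mxE rmorphM. Qed.

Lemma adjmx_trC m n (A : 'M[C]_(m, n)) : (A ^t* )%sesqui = adjmx A.
Proof. by rewrite /adjmx map_trmx. Qed.

Lemma scD (A B : 'M[C]_1) : sc (A + B) = sc A + sc B.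
Proof. by rewrite /sc mxE. Qed.

Lemma scZ (k : C) (A : 'M[C]_1) : sc (k *: A) = k * sc A.
Proof. by rewrite /sc mxE. Qed.

Lemma scM (A B : 'M[C]_1) : sc (A *m B) = sc A * sc B.
Proof. by rewrite /sc mxE big_ord1. Qed.

Lemma sum_normr_sqr_ge0 m n (A : 'M[C]_(m, n)) :
  0 <= \sum_(i < m) \sum_(j < n) `|A i j| ^+ 2.
Proof. by rewrite sumr_ge0 // => i _; rewrite sumr_ge0 // => j _; rewrite exprn_ge0. Qed.

Lemma fnorm_ge0 m n (A : 'M[C]_(m, n)) : 0 <= fnorm A.
Proof. by rewrite sqrtC_ge0 sum_normr_sqr_ge0. Qed.

Lemma fnorm_sqr m n (A : 'M[C]_(m, n)) :
  fnorm A ^+ 2 = \sum_(i < m) \sum_(j < n) `|A i j| ^+ 2.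
Proof. exact: sqrtCK. Qed.

Lemma fnorm_cV_sqr n (v : 'cV[C]_n) : fnorm v ^+ 2 = \sum_i `|v i 0| ^+ 2.
Proof. by rewrite fnorm_sqr; apply: eq_bigr => i _; rewrite big_ord1. Qed.

Lemma fnorm_rV_sqr n (v : 'rV[C]_n) : fnorm v ^+ 2 = \sum_j `|v 0 j| ^+ 2.
Proof. by rewrite fnorm_sqr big_ord1. Qed.

Lemma fnorm_eq0 m n (A : 'M[C]_(m, n)) : (fnorm A == 0) = (A == 0).
Proof.
have sq_ge0 (i : 'I_m) (j : 'I_n) : 0 <= `|A i j| ^+ 2 by rewrite exprn_ge0.
rewrite /fnorm sqrtC_eq0 psumr_eq0 => [|i _]; last by rewrite sumr_ge0.
apply/allP/eqP => [A0|-> i _]; last first.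
  by rewrite /= big1 // => j _; rewrite mxE normr0 expr0n.
apply/matrixP => i j; move/(_ i (mem_index_enum _)): A0; rewrite psumr_eq0 // => /allP.
by move/(_ j (mem_index_enum _)); rewrite sqrf_eq0 normr_eq0 mxE => /eqP.
Qed.

Lemma fnormZ m n (k : C) (A : 'M[C]_(m, n)) : fnorm (k *: A) = `|k| * fnorm A.
Proof.
rewrite /fnorm -(sqrCK (normr_ge0 k)) -sqrtCM ?nnegrE ?sum_normr_sqr_ge0 ?exprn_ge0 //.
congr sqrtC; rewrite mulr_sumr; apply: eq_bigr => i _.
by rewrite mulr_sumr; apply: eq_bigr => j _; rewrite mxE normrM exprMn.
Qed.

Lemma fnorm_adjmx m n (A : 'M[C]_(m, n)) : fnorm (adjmx A) = fnorm A.
Proof.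
rewrite /fnorm exchange_big; congr sqrtC; apply: eq_bigr => i _.
by apply: eq_bigr => j _; rewrite adjmxE norm_conjC.
Qed.

Lemma fnorm_cV_rV_mul m n (a : 'cV[C]_m) (v : 'rV[C]_n) :
  fnorm (a *m v) = fnorm a * fnorm v.
Proof.
rewrite /fnorm -sqrtCM ?nnegrE ?sum_normr_sqr_ge0 //.
congr sqrtC; rewrite big_ord1 mulr_suml; apply: eq_bigr => i _.
rewrite big_ord1 mulr_sumr; apply: eq_bigr => j _.
by rewrite mxE big_ord1 normrM exprMn.
Qed.

Lemma sc_adjmx_mul n (a b : 'cV[C]_n) : sc (adjmx a *m b) = \sum_i (a i 0)^* * b i 0.
Proof. by rewrite /sc mxE; apply: eq_bigr => i _; rewrite adjmxE. Qed.

Lemma sc_adjmx_self n (v : 'cV[C]_n) : sc (adjmx v *m v) = fnorm v ^+ 2.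
Proof. by rewrite sc_adjmx_mul fnorm_cV_sqr; apply: eq_bigr => i _; rewrite normCKC. Qed.

Lemma normr_sc_mul_le n (u : 'rV[C]_n) (v : 'cV[C]_n) :
  `|sc (u *m v)| <= fnorm u * fnorm v.
Proof.
have dotmx_sqrt (x : 'rV[C]_n) : sqrtC (dotmx x x) = fnorm x.
  rewrite dotmxE /fnorm big_ord1 mxE; congr sqrtC; apply: eq_bigr => j _.
  by rewrite !mxE normCK.
have : `|dotmx u (adjmx v)| <= sqrtC (dotmx u u) * sqrtC (dotmx (adjmx v) (adjmx v)).
  exact: (CauchySchwarz_sqrt (@dotmx C n) u (adjmx v)).1.
by rewrite !dotmx_sqrt fnorm_adjmx dotmxE adjmx_trC adjmxK.
Qed.

Lemma fnorm_rV_mul_le m n (u : 'rV[C]_m) (D : 'M[C]_(m, n)) :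
  fnorm (u *m D) <= fnorm u * fnorm D.
Proof.
rewrite -ler_sqr ?nnegrE ?mulr_ge0 ?fnorm_ge0 // exprMn fnorm_rV_sqr.
rewrite [fnorm D ^+ 2]fnorm_sqr exchange_big mulr_sumr; apply: ler_sum => j _.
have -> : (u *m D) 0 j = sc (u *m col j D) by rewrite /sc !mxE; apply: eq_bigr => i _; rewrite !mxE.
have -> : \sum_(i < m) `|D i j| ^+ 2 = fnorm (col j D) ^+ 2.
  by rewrite fnorm_cV_sqr; apply: eq_bigr => i _; rewrite mxE.
by rewrite -exprMn ler_sqr ?nnegrE ?mulr_ge0 ?fnorm_ge0 // normr_sc_mul_le.
Qed.

Lemma normr_sc_mul3_le m n (u : 'rV[C]_m) (D : 'M[C]_(m, n)) (w : 'cV[C]_n) :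
  `|sc (u *m D *m w)| <= fnorm u * fnorm D * fnorm w.
Proof.
apply: le_trans; first exact: normr_sc_mul_le.
by rewrite ler_wpM2r ?fnorm_ge0 ?fnorm_rV_mul_le.
Qed.

Lemma mulmx_adjmx_diag m n (A : 'M[C]_(m, n)) i : (A *m adjmx A) i i = fnorm (row i A) ^+ 2.
Proof.
by rewrite fnorm_rV_sqr mxE; apply: eq_bigr => j _; rewrite adjmxE !mxE normCK.
Qed.

Lemma relay_power_entry N Ms (Ps sr2 : C) (Hsr : 'M[C]_(N, Ms)) (W : 'M[C]_N)
    (b : 'cV[C]_Ms) i :
  (Ps *: (W *m Hsr *m b *m adjmx b *m adjmx Hsr *m adjmx W) + sr2 *: (W *m adjmx W)) i i =
  Ps * `|(W *m (Hsr *m b)) i 0| ^+ 2 + sr2 * fnorm (row i W) ^+ 2.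
Proof.
have -> : W *m Hsr *m b *m adjmx b *m adjmx Hsr *m adjmx W =
    (W *m (Hsr *m b)) *m adjmx (W *m (Hsr *m b)) by rewrite !adjmxM !mulmxA.
have := mulmx_adjmx_diag (W *m (Hsr *m b)) i; have := mulmx_adjmx_diag W i.
rewrite !mxE => -> ->.
by rewrite [fnorm (row i (W *m _)) ^+ 2]fnorm_rV_sqr big_ord1 !mxE.
Qed.

Lemma sc_quadform_diag n (d : 'rV[C]_n) (v : 'cV[C]_n) :
  sc (adjmx v *m diag_mx d *m v) = \sum_j d 0 j * `|v j 0| ^+ 2.
Proof.
rewrite /sc mxE; apply: eq_bigr => j _.
by rewrite mul_mx_diag !mxE normCKC; ring.
Qed.

Lemma unitarymx_adjmx_mul n (P : 'M[C]_n) : P \is unitarymx -> adjmx P *m P = 1%:M.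
Proof. by move/unitarymxP; rewrite adjmx_trC => /mulmx1C. Qed.

Lemma fnorm_unitarymx_mul n (P : 'M[C]_n) (v : 'cV[C]_n) :
  P \is unitarymx -> fnorm (P *m v) = fnorm v.
Proof.
move=> PU; apply: (pexpIrn (n := 2)) => //; rewrite ?nnegrE ?fnorm_ge0 //.
by rewrite -!sc_adjmx_self adjmxM -mulmxA (mulmxA (adjmx P)) unitarymx_adjmx_mul ?mul1mx.
Qed.

Lemma spectral_diag_le n (A : 'M[C]_n) (lam : C) j : A \is normalmx ->
  (forall mu (v : 'cV[C]_n), v != 0 -> A *m v = mu *: v -> mu <= lam) ->
  spectral_diag A 0 j <= lam.
Proof.
move=> /orthomx_spectralP; set P := spectralmx A; set d := spectral_diag A => eA lam_max.
have PU : P \is unitarymx := spectral_unitarymx A.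
have PPt : P *m adjmx P = 1%:M by move/unitarymxP: PU; rewrite adjmx_trC.
rewrite invmx_unitary // adjmx_trC in eA.
have P_col : P *m col j (adjmx P) = col j 1%:M by rewrite !colE mulmxA PPt.
apply: (lam_max _ (col j (adjmx P))).
  apply: contraTneq isT => v0; move/matrixP/(_ j 0): P_col.
  by rewrite v0 mulmx0 !mxE eqxx => /esym/eqP; rewrite oner_eq0.
have diag_col : diag_mx d *m col j 1%:M = d 0 j *: col j 1%:M.
  by apply/matrixP => i k; rewrite mul_diag_mx !mxE; case: eqVneq => [->|]; rewrite ?mulr0.
by rewrite eA -!mulmxA P_col diag_col -scalemxAr !colE mul1mx.
Qed.

Lemma normal_quadform_le n (A : 'M[C]_n) (lam : C) (u : 'cV[C]_n) : A \is normalmx ->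
  (forall mu (v : 'cV[C]_n), v != 0 -> A *m v = mu *: v -> mu <= lam) ->
  sc (adjmx u *m A *m u) <= lam * fnorm u ^+ 2.
Proof.
move=> An lam_max; have PU := spectral_unitarymx A.
have /orthomx_spectralP eA := An; rewrite invmx_unitary // adjmx_trC in eA.
have -> : adjmx u *m A *m u =
    adjmx (spectralmx A *m u) *m diag_mx (spectral_diag A) *m (spectralmx A *m u).
  by rewrite {1}eA adjmxM !mulmxA.
rewrite -(fnorm_unitarymx_mul u PU) sc_quadform_diag fnorm_cV_sqr mulr_sumr.
by apply: ler_sum => j _; rewrite ler_wpM2r ?exprn_ge0 ?spectral_diag_le.
Qed.

Lemma top_eigvec_max_gain m n (H : 'M[C]_(m, n)) (b b' : 'cV[C]_n) :
  top_eigvec (adjmx H *m H) b -> fnorm b' = 1 ->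
  fnorm (H *m b') ^+ 2 <= fnorm (H *m b) ^+ 2.
Proof.
move=> [b1 [lam [Hb lam_max]]] b'1.
have gram_normal : adjmx H *m H \is normalmx.
  by rewrite qualifE /= adjmx_trC adjmxM adjmxK.
have -> : fnorm (H *m b) ^+ 2 = lam.
  rewrite -sc_adjmx_self adjmxM -mulmxA (mulmxA (adjmx H)) Hb -scalemxAr scZ.
  by rewrite sc_adjmx_self b1 expr1n mulr1.
have := normal_quadform_le b' gram_normal lam_max.
by rewrite b'1 expr1n mulr1 -sc_adjmx_self adjmxM !mulmxA.
Qed.

Lemma sc_rank1_perturb m n (H : 'M[C]_(m, n)) (r : 'cV[C]_m) (w : 'cV[C]_n) (a : C) :
  fnorm r = 1 ->
  sc (adjmx r *m (H + a *: (r *m adjmx w)) *m w) = sc (adjmx r *m H *m w) + a * fnorm w ^+ 2.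
Proof.
move=> r1; rewrite mulmxDr mulmxDl scD; congr (_ + _).
rewrite -scalemxAr -scalemxAl scZ; congr (_ * _).
by rewrite !mulmxA -(mulmxA (adjmx r *m r)) scM !sc_adjmx_self r1 expr1n mul1r.
Qed.

Lemma perturbed_gain_ge m n (H dH : 'M[C]_(m, n)) (r : 'cV[C]_m) (w : 'cV[C]_n) (eps : C) :
  fnorm r = 1 -> fnorm dH <= eps ->
  `|sc (adjmx r *m H *m w)| - eps * fnorm w <= `|sc (adjmx r *m (H + dH) *m w)|.
Proof.
move=> r1 dH_le; rewrite mulmxDr mulmxDl scD.
apply: le_trans (lerB_normD _ _); rewrite lerD2l lerN2.
apply: le_trans; first exact: normr_sc_mul3_le.
by rewrite fnorm_adjmx r1 mul1r ler_wpM2r ?fnorm_ge0.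
Qed.

Lemma exists_worst_perturbation m n (H : 'M[C]_(m, n)) (r : 'cV[C]_m) (w : 'cV[C]_n)
    (eps : C) :
  fnorm r = 1 -> 0 <= eps ->
  exists2 dH : 'M[C]_(m, n), fnorm dH <= eps &
    `|sc (adjmx r *m (H + dH) *m w)| = Num.max (`|sc (adjmx r *m H *m w)| - eps * fnorm w) 0.
Proof.
move=> r1 eps0; set z := sc _; set nw := fnorm w; have nw0 : 0 <= nw := fnorm_ge0 w.
have [p p1 zp] := polar_decomp z.
(* The rank-one error along r w^H, phased against z, lowers |z| by c * ||w||. *)
pose D (c : C) := (- (c * p / nw)) *: (r *m adjmx w).
have gain_D c : sc (adjmx r *m (H + D c) *m w) = (`|z| - c * nw) * p.
  rewrite sc_rank1_perturb // -/z -/nw {1}zp.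
  have [->|nw_neq0] := eqVneq nw 0; first by rewrite invr0 !(mulr0, expr0n, subr0) addr0.
  by field.
have fnorm_D c : 0 <= c -> fnorm (D c) <= c.
  move=> c0; rewrite fnormZ fnorm_cV_rV_mul fnorm_adjmx r1 mul1r normrN !normrM p1 mulr1.
  rewrite normfV (ger0_norm c0) (ger0_norm nw0) -/nw.
  by have [->|nw_neq0] := eqVneq nw 0; rewrite ?mulr0 // -mulrA mulVf ?mulr1.
have gap_real : `|z| - eps * nw \is Num.real by rewrite rpredB ?normr_real ?ger0_real ?mulr_ge0.
case: (real_ge0P gap_real) => [gap_ge0|gap_lt0].
  by exists (D eps); rewrite ?fnorm_D // gain_D normrM p1 mulr1 ger0_norm.
have nw_gt0 : 0 < nw.
  rewrite lt_def nw0 andbT; apply: contraTneq gap_lt0 => ->.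
  by rewrite mulr0 subr0 normr_lt0.
exists (D (`|z| / nw)); last by rewrite gain_D divfK ?gt_eqF // subrr mul0r normr0.
apply: le_trans (fnorm_D _ _) _; first by rewrite divr_ge0.
by rewrite ler_pdivrMr // ltW // -subr_lt0.
Qed.

Lemma snr_rank1 N Ms Md (Ps sr2 sd2 k : C) (Hsr : 'M[C]_(N, Ms)) (Hrd : 'M[C]_(Md, N))
    (w : 'cV[C]_N) (b : 'cV[C]_Ms) (r : 'cV[C]_Md) (dH : 'M[C]_(Md, N))
    (t := `|sc (adjmx r *m (Hrd + dH) *m w)| ^+ 2) (hb := fnorm (Hsr *m b) ^+ 2) :
  snr Ps sr2 sd2 Hsr Hrd (k *: (w *m adjmx b *m adjmx Hsr)) b r dH =
  Ps * (`|k| ^+ 2 * t * hb ^+ 2) / (sr2 * (`|k| ^+ 2 * t * hb) + sd2).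
Proof.
rewrite /snr /t /hb; set x := sc (adjmx r *m (Hrd + dH) *m w); set h := Hsr *m b.
have -> : adjmx r *m (Hrd + dH) *m (k *: (w *m adjmx b *m adjmx Hsr)) = (k * x) *: adjmx h.
  rewrite -(mulmxA w) -adjmxM -scalemxAr mulmxA [_ *m w]mx11_scalar.
  by rewrite mul_scalar_mx scalerA.
rewrite fnormZ fnorm_adjmx -!scalemxAl scZ -mulmxA sc_adjmx_self.
by rewrite !normrM (ger0_norm (fnorm_ge0 h)) -[fnorm h * fnorm h]expr2 !exprMn.
Qed.

Lemma relay_rank1_power_entry N Ms (Ps sr2 k : C) (Hsr : 'M[C]_(N, Ms)) (w : 'cV[C]_N)
    (b : 'cV[C]_Ms) (W := k *: (w *m adjmx b *m adjmx Hsr)) (hb := fnorm (Hsr *m b) ^+ 2) i :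
  (Ps *: (W *m Hsr *m b *m adjmx b *m adjmx Hsr *m adjmx W) + sr2 *: (W *m adjmx W)) i i =
  Ps * (`|k| ^+ 2 * `|w i 0| ^+ 2 * hb ^+ 2) + sr2 * (`|k| ^+ 2 * `|w i 0| ^+ 2 * hb).
Proof.
rewrite relay_power_entry /W /hb; set h := Hsr *m b.
rewrite -(mulmxA w) -adjmxM -/h -!scalemxAl -mulmxA.
have -> : adjmx h *m h = (fnorm h ^+ 2)%:M by rewrite [LHS]mx11_scalar -sc_adjmx_self.
have -> : row i (k *: (w *m adjmx h)) = (k * w i 0) *: adjmx h.
  by apply/rowP => j; rewrite !mxE big_ord1 !adjmxE !mxE mulrA.
rewrite mul_mx_scalar !mxE !fnormZ fnorm_adjmx !normrM.
by rewrite (ger0_norm (fnorm_ge0 h)); ring.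
Qed.

Lemma normr_sqrtC_sqr (x : C) : 0 <= x -> `|sqrtC x| ^+ 2 = x.
Proof. by move=> x0; rewrite ger0_norm ?sqrtC_ge0 // sqrtCK. Qed.

Definition normalized n (v : 'cV[C]_n) := (fnorm v)^-1 *: v.

Lemma fnorm_normalized n (v : 'cV[C]_n) : v != 0 -> fnorm (normalized v) = 1.
Proof.
by rewrite -fnorm_eq0 => v0; rewrite fnormZ normfV ger0_norm ?fnorm_ge0 // mulVf.
Qed.

Lemma sc_normalized n (v : 'cV[C]_n) : sc (adjmx (normalized v) *m v) = fnorm v.
Proof.
rewrite adjmxZ -scalemxAl scZ sc_adjmx_self conj_Creal ?rpredV ?ger0_real ?fnorm_ge0 //.
by have [->|v0] := eqVneq (fnorm v) 0; rewrite ?invr0 ?mul0r // expr2 mulKf.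
Qed.

Lemma feasible_aux_scale n (v : 'cV[C]_n) (c : C) : 0 <= c ->
  (forall i, `|v i 0| <= c) -> exists2 w, feasible_aux w & v = c *: w.
Proof.
move=> c0 v_le; have [c_eq0|c_neq0] := eqVneq c 0.
  exists 0; first by move=> i; rewrite mxE normr0 ler01.
  apply/matrixP => i j; rewrite ord1 scaler0 mxE; apply/eqP.
  by rewrite -normr_le0 -c_eq0 v_le.
exists (c^-1 *: v); last by rewrite scalerA divff // scale1r.
move=> i; rewrite mxE normrM normfV (ger0_norm c0) mulrC.
by rewrite ler_pdivrMr ?mul1r // lt_def c_neq0.
Qed.

End Matrix.

Section Relay.
Variables (R : realType) (N Ms Md : nat) (Ps Pr sr2 sd2 eps : R[i]).
Variables (Hsr : 'M[R[i]]_(N, Ms)) (Hrd : 'M[R[i]]_(Md, N)).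
Hypotheses (Ps_gt0 : 0 < Ps) (Pr_gt0 : 0 < Pr) (sr2_gt0 : 0 < sr2) (sd2_gt0 : 0 < sd2).
Hypothesis eps_ge0 : 0 <= eps.

Local Notation C := R[i].
Local Notation snrP := (snr Ps sr2 sd2 Hsr Hrd).
Local Notation gain r dH w := `|sc (adjmx r *m (Hrd + dH) *m w)|.
Local Notation snr_opt := (snr_opt Ps Pr sr2 sd2).

Definition src_gain (b : 'cV[C]_Ms) := fnorm (Hsr *m b) ^+ 2.

Lemma src_gain_ge0 b : 0 <= src_gain b.
Proof. by rewrite exprn_ge0 ?fnorm_ge0. Qed.

Lemma faux_real w : faux eps Hrd w \is Num.real.
Proof. by rewrite rpredB ?ger0_real ?mulr_ge0 ?fnorm_ge0. Qed.

Definition rank1_relay (w : 'cV[C]_N) (b : 'cV[C]_Ms) : 'M[C]_N :=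
  sqrtC (relay_scale Ps Pr sr2 (src_gain b)) *: (w *m adjmx b *m adjmx Hsr).

Lemma rank1_relay_feasible w b (r : 'cV[C]_Md) : fnorm b = 1 -> fnorm r = 1 ->
  feasible_aux w -> feasibleP1 Ps Pr sr2 Hsr (rank1_relay w b) b r.
Proof.
move=> b1 r1 w_feas; split=> // i.
rewrite relay_rank1_power_entry normr_sqrtC_sqr ?relay_scale_ge0 ?src_gain_ge0 //.
apply: relay_power_rank1 => //; first exact: src_gain_ge0.
  by rewrite exprn_ge0.
by rewrite exprn_ile1 ?w_feas.
Qed.

Lemma snr_rank1_relay w b r dH :
  snrP (rank1_relay w b) b r dH = snr_opt (src_gain b) (gain r dH w ^+ 2).
Proof.
rewrite snr_rank1 normr_sqrtC_sqr ?relay_scale_ge0 ?src_gain_ge0 //.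
have t0 : 0 <= gain r dH w ^+ 2 := exprn_ge0 2 (normr_ge0 _).
by rewrite -/(src_gain b) (snr_opt_rank1 Ps_gt0 Pr_gt0 sr2_gt0 sd2_gt0 (src_gain_ge0 b) t0).
Qed.

Lemma normalized_gain_ge w dH : Hrd *m w != 0 -> fnorm dH <= eps ->
  Num.max (faux eps Hrd w) 0 <= gain (normalized (Hrd *m w)) dH w.
Proof.
move=> Hw0 dH_le; apply: real_max0_le_ge0 (faux_real w) (normr_ge0 _) _.
have := perturbed_gain_ge Hrd w (fnorm_normalized Hw0) dH_le.
by rewrite -mulmxA sc_normalized ger0_norm ?fnorm_ge0.
Qed.

Lemma normalized_gain_attained w : Hrd *m w != 0 ->
  exists2 dH, fnorm dH <= eps & gain (normalized (Hrd *m w)) dH w = Num.max (faux eps Hrd w) 0.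
Proof.
move=> Hw0; have [dH dH_le worstE] := exists_worst_perturbation Hrd w (fnorm_normalized Hw0) eps_ge0.
by exists dH; rewrite // worstE -mulmxA sc_normalized ger0_norm ?fnorm_ge0.
Qed.

Lemma worst_gain_le_fmax (r : 'cV[C]_Md) w w0 : fnorm r = 1 -> feasible_aux w ->
  (forall w', feasible_aux w' -> faux eps Hrd w' <= faux eps Hrd w0) ->
  exists2 dH, fnorm dH <= eps & gain r dH w <= Num.max (faux eps Hrd w0) 0.
Proof.
move=> r1 w_feas w0_opt; have [dH dH_le worstE] := exists_worst_perturbation Hrd w r1 eps_ge0.
exists dH; rewrite // worstE; apply: real_max0_le (faux_real w0) _.
  by rewrite rpredB ?normr_real ?ger0_real ?mulr_ge0 ?fnorm_ge0.
apply: le_trans (w0_opt w w_feas); rewrite lerD2r -mulmxA.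
by apply: le_trans (normr_sc_mul_le _ _) _; rewrite fnorm_adjmx r1 mul1r.
Qed.

Lemma effective_relay_output W b (r : 'cV[C]_Md) : feasibleP1 Ps Pr sr2 Hsr W b r ->
  exists2 w, feasible_aux w &
    W *m (Hsr *m b) = sqrtC (output_power_max Ps Pr sr2 (src_gain b)) *: w.
Proof.
move=> [power _]; have c0 := output_power_max_ge0 Ps_gt0 Pr_gt0 sr2_gt0 (src_gain_ge0 b).
apply: feasible_aux_scale => [|i]; first by rewrite sqrtC_ge0.
have := power i; rewrite relay_power_entry => power_i.
rewrite -ler_sqr ?nnegrE ?sqrtC_ge0 // sqrtCK.
apply: (output_power_le Ps_gt0 sr2_gt0 _ _ _ power_i); rewrite ?exprn_ge0 ?fnorm_ge0 ?src_gain_ge0 //.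
have -> : (W *m (Hsr *m b)) i 0 = sc (row i W *m (Hsr *m b)) by rewrite -row_mul /sc [RHS]mxE.
by rewrite -exprMn ler_sqr ?nnegrE ?mulr_ge0 ?fnorm_ge0 // normr_sc_mul_le.
Qed.

Lemma snr_le_effective W b r dH w :
  W *m (Hsr *m b) = sqrtC (output_power_max Ps Pr sr2 (src_gain b)) *: w ->
  snrP W b r dH <= snr_opt (src_gain b) (gain r dH w ^+ 2).
Proof.
move=> EW; have c0 := output_power_max_ge0 Ps_gt0 Pr_gt0 sr2_gt0 (src_gain_ge0 b).
rewrite /snr -(mulmxA _ Hsr); set g := adjmx r *m (Hrd + dH) *m W.
apply: snr_le_snr_opt; rewrite ?src_gain_ge0 ?exprn_ge0 //.
  by rewrite -exprMn ler_sqr ?nnegrE ?mulr_ge0 ?fnorm_ge0 // normr_sc_mul_le.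
by rewrite /g -mulmxA EW -scalemxAr scZ normrM exprMn normr_sqrtC_sqr.
Qed.

End Relay.

Theorem theorem1 (R : realType) (N Ms Md : nat)
  (Ps Pr sr2 sd2 eps : R[i])
  (Hsr : 'M[R[i]]_(N, Ms)) (Hrd : 'M[R[i]]_(Md, N))
  (w0 : 'cV[R[i]]_N) (f0 : R[i]) (b : 'cV[R[i]]_Ms) :
  (0 < N)%N -> (0 < Ms)%N -> (0 < Md)%N ->
  0 < Ps -> 0 < Pr -> 0 < sr2 -> 0 < sd2 -> 0 <= eps ->
  (* w0 is an optimal solution, f0 the maximum value, of max f(w) s.t. |w_i| <= 1 *)
  feasible_aux w0 ->
  (forall w : 'cV[R[i]]_N, feasible_aux w -> faux eps Hrd w <= faux eps Hrd w0) ->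
  f0 = faux eps Hrd w0 ->
  (* r below is well defined *)
  Hrd *m w0 != 0 ->
  (* b = nu(Hsr^H Hsr) *)
  top_eigvec (adjmx Hsr *m Hsr) b ->
  let hb2 := fnorm (Hsr *m b) ^+ 2 in
  let W := sqrtC (Pr / (hb2 * (Ps * hb2 + sr2))) *: (w0 *m adjmx b *m adjmx Hsr) in
  let r := (fnorm (Hrd *m w0))^-1 *: (Hrd *m w0) in
  let Prt := sqrtC (Pr / (Ps * hb2 + sr2)) in
  let fp := Num.max f0 0 in
  let SNR := Prt ^+ 2 * Ps * hb2 * fp ^+ 2 / (Prt ^+ 2 * sr2 * fp ^+ 2 + sd2) in
  (* (W, b, r) is feasible for P1 *)
  feasibleP1 Ps Pr sr2 Hsr W b r /\
  (* its worst-case SNR over ||dH||_F <= eps is exactly SNR (minimum attained) *)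
  (forall dH : 'M[R[i]]_(Md, N), fnorm dH <= eps ->
     SNR <= snr Ps sr2 sd2 Hsr Hrd W b r dH) /\
  (exists dH : 'M[R[i]]_(Md, N), fnorm dH <= eps /\
     snr Ps sr2 sd2 Hsr Hrd W b r dH = SNR) /\
  (* no feasible (W', b', r') has a larger worst-case SNR *)
  (forall (W' : 'M[R[i]]_N) (b' : 'cV[R[i]]_Ms) (r' : 'cV[R[i]]_Md),
     feasibleP1 Ps Pr sr2 Hsr W' b' r' ->
     exists dH : 'M[R[i]]_(Md, N), fnorm dH <= eps /\
       snr Ps sr2 sd2 Hsr Hrd W' b' r' dH <= SNR).
Proof.
move=> _ _ _ Ps_gt0 Pr_gt0 sr2_gt0 sd2_gt0 eps_ge0 w0_feas w0_opt -> Hw0 b_top.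
move=> hb2 W r Prt fp SNR.
have r1 : fnorm r = 1 := fnorm_normalized Hw0.
have fp_ge0 : 0 <= fp by rewrite /fp; case: (real_ge0P (faux_real Hrd eps_ge0 w0)).
have SNRE : SNR = snr_opt Ps Pr sr2 sd2 hb2 (fp ^+ 2).
  by rewrite /SNR /Prt sqrtCK snr_optE ?exprn_ge0 ?fnorm_ge0.
split; [exact: rank1_relay_feasible b_top.1 r1 w0_feas | split; [|split]].
- move=> dH dH_le; rewrite SNRE snr_rank1_relay //.
  apply: snr_opt_le; rewrite ?exprn_ge0 ?fnorm_ge0 ?src_gain_ge0 //.
  by rewrite ler_sqr ?nnegrE // (normalized_gain_ge eps_ge0 Hw0 dH_le).
- have [dH dH_le gainE] := normalized_gain_attained eps_ge0 Hw0.
  by exists dH; rewrite // snr_rank1_relay // gainE SNRE.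
- move=> W' b' r' feas; have [w w_feas EW] := effective_relay_output Ps_gt0 Pr_gt0 sr2_gt0 feas.
  have [dH dH_le gain_le] := worst_gain_le_fmax eps_ge0 feas.2.2 w_feas w0_opt.
  exists dH; split=> //.
  apply: le_trans (snr_le_effective Hrd Ps_gt0 Pr_gt0 sr2_gt0 sd2_gt0 r' dH EW) _.
  rewrite SNRE; apply: snr_opt_le; rewrite ?exprn_ge0 ?fnorm_ge0 ?src_gain_ge0 //.
    by have := top_eigvec_max_gain b_top feas.2.1.
  by rewrite ler_sqr ?nnegrE.
Qed.
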